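(* Let $F(\rho,\eta)$ be a smooth function on an open subset of the half-plane $\{\rho>0\}$ satisfying $F_{\rho\rho}+F_{\eta\eta}=\frac{3F}{4\rho^2}$ (i.e. $F$ is an eigenfunction with eigenvalue $3/4$ of the hyperbolic Laplacian $\rho^2(\partial_\rho^2+\partial_\eta^2)$), and let $\varphi$ be a twistor, i.e. $\varphi=c_0m_0+c_1m_1$ with $c_0=-(a\eta-b)/\sqrt\rho$, $c_1=a\sqrt\rho$ for some constants $a,b\in\mathbb{R}$. Define $$\Phi=\tfrac12F\,\flat\varphi+dF\cdot\varphi,$$ where $\flat\varphi=c_0\mu_0+c_1\mu_1$ and $dF\cdot\varphi=\rho F_\rho(c_0\mu_0-c_1\mu_1)+\rho F_\eta(c_1\mu_0+c_0\mu_1)$. Then $\Phi$ is a solution of the Joyce equation; explicitly, writing $\Phi=A_0\mu_0+A_1\mu_1$, i.e. $$A_0=(\tfrac12F+\rho F_\rho)c_0+\rho F_\eta c_1,\qquad A_1=\rho F_\eta c_0+(\tfrac12F-\rho F_\rho)c_1,$$ one has $(A_0)_\rho+(A_1)_\eta=A_0/\rho$ and $(A_0)_\eta-(A_1)_\rho=0$.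
   Context: Setting: the hyperbolic plane in half-space coordinates $(\rho>0,\eta)$ with metric $(d\rho^2+d\eta^2)/\rho^2$. Its spinor bundle $\mathcal W$ is a real rank-$2$ bundle with orthonormal frame $m_0,m_1$ and dual coframe $\mu_0,\mu_1$ of $\mathcal W^*$, where $T^*\mathcal H^2$ is identified with trace-free symmetric products via $\mu_0^2-\mu_1^2=d\rho/\rho$, $2\mu_0\mu_1=d\eta/\rho$; then $dF=\rho F_\rho(\mu_0^2-\mu_1^2)+2\rho F_\eta\mu_0\mu_1$, and $dF\cdot\varphi$ is the natural contraction $T^*\mathcal H^2\otimes\mathcal W\to\mathcal W^*$ (given explicitly in the claim), while $\flat$ is the metric isomorphism $\mathcal W\to\mathcal W^*$ sending $m_i\mapsto\mu_i$. Twistors are the sections of $\mathcal W$ of the stated form (the ''constant'' sections in the model $\mathcal W=\mathcal H^2\times\mathbb{R}^2$). The Joyce equation for a section $\Phi=A_0\mu_0+A_1\mu_1$ of $\mathcal W^*$ is the system $(A_0)_\rho+(A_1)_\eta=A_0/\rho$, $(A_0)_\eta-(A_1)_\rho=0$. *)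

From Stdlib Require Import Reals.
From Coquelicot Require Import Coquelicot.
Open Scope R_scope.

(* Functions on the half-plane, in coordinates (rho, eta). *)
Definition Fun2 := R -> R -> R.

Definition d_rho (f : Fun2) : Fun2 := fun r e => Derive (fun r' => f r' e) r.
Definition d_eta (f : Fun2) : Fun2 := fun r e => Derive (fun e' => f r e') e.

Definition open2 (U : R -> R -> Prop) : Prop :=
  forall r e, U r e -> exists eps, 0 < eps /\
    forall r' e', Rabs (r' - r) < eps -> Rabs (e' - e) < eps -> U r' e'.

Fixpoint Ck_on (U : R -> R -> Prop) (k : nat) (f : Fun2) : Prop :=
  match k with
  | O => forall r e, U r e ->
           continuous (fun p : R * R => f (fst p) (snd p)) (r, e)
  | S k' => (forall r e, U r e ->
               continuous (fun p : R * R => f (fst p) (snd p)) (r, e) /\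
               ex_derive (fun r' => f r' e) r /\ ex_derive (fun e' => f r e') e)
            /\ Ck_on U k' (d_rho f) /\ Ck_on U k' (d_eta f)
  end.

Definition smooth_on (U : R -> R -> Prop) (f : Fun2) : Prop :=
  forall k, Ck_on U k f.

(* Sections of W^* (and of W via the frame m_0,m_1) are represented by
   their coefficient pairs in the (co)frame. *)
Definition Sec := R -> R -> (R * R).

Definition twistor (a b : R) : Sec :=
  fun r e => (- (a * e - b) / sqrt r, a * sqrt r).

(* flat : W -> W^*,  m_i |-> mu_i *)
Definition flat (phi : Sec) : Sec := phi.

Definition dF_dot (F : Fun2) (phi : Sec) : Sec :=
  fun r e =>
    let c0 := fst (phi r e) in let c1 := snd (phi r e) in
    (r * d_rho F r e * c0 + r * d_eta F r e * c1,
     - (r * d_rho F r e * c1) + r * d_eta F r e * c0).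

Definition PhiOf (F : Fun2) (phi : Sec) : Sec :=
  fun r e =>
    ((1/2) * F r e * fst (flat phi r e) + fst (dF_dot F phi r e),
     (1/2) * F r e * snd (flat phi r e) + snd (dF_dot F phi r e)).

Definition joyce_at (Phi : Sec) (r e : R) : Prop :=
  let A0 := fun r e => fst (Phi r e) in
  let A1 := fun r e => snd (Phi r e) in
  ex_derive (fun r' => A0 r' e) r /\ ex_derive (fun e' => A0 r e') e /\
  ex_derive (fun r' => A1 r' e) r /\ ex_derive (fun e' => A1 r e') e /\
  d_rho A0 r e + d_eta A1 r e = A0 r e / r /\
  d_eta A0 r e - d_rho A1 r e = 0.

From Stdlib Require Import Reals Lra.
From Coquelicot Require Import Coquelicot.
Open Scope R_scope.

(* Twistors are the solutions of the first-order system
   d_rho c0 = -c0/(2 rho), d_rho c1 = c1/(2 rho), d_eta c0 = -c1/rho, d_eta c1 = 0.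
   Differentiating A0 and A1 by the product rule and eliminating the derivatives
   of c0, c1 with this system, both Joyce expressions become, pointwise, linear
   combinations of F_{rho eta} - F_{eta rho} and F_{rho rho} + F_{eta eta} - 3F/(4 rho^2),
   which vanish by Schwarz's theorem and by the eigenvalue equation. *)

Definition twistor_eq_at (phi : Sec) (r e : R) : Prop :=
  is_derive (fun r' => fst (phi r' e)) r (- fst (phi r e) / (2 * r)) /\
  is_derive (fun r' => snd (phi r' e)) r (snd (phi r e) / (2 * r)) /\
  is_derive (fun e' => fst (phi r e')) e (- snd (phi r e) / r) /\
  is_derive (fun e' => snd (phi r e')) e 0.

Lemma twistor_eq_at_twistor (a b r e : R) : 0 < r -> twistor_eq_at (twistor a b) r e.
Proof.
  intros Hr.
  assert (Hs : sqrt r <> 0) by now apply Rgt_not_eq, sqrt_lt_R0.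
  assert (Hss : sqrt r * sqrt r = r) by (apply sqrt_sqrt; lra).
  unfold twistor_eq_at, twistor; cbn [fst snd].
  split; [|split; [|split]]; try apply is_derive_const;
    auto_derive; auto;
    set (s := sqrt r) in *; rewrite <- Hss; field; auto.
Qed.

Lemma Ck_on_d_rho (U : R -> R -> Prop) (k : nat) (f : Fun2) :
  Ck_on U (S k) f -> Ck_on U k (d_rho f).
Proof. intros [_ [H _]]; exact H. Qed.

Lemma Ck_on_d_eta (U : R -> R -> Prop) (k : nat) (f : Fun2) :
  Ck_on U (S k) f -> Ck_on U k (d_eta f).
Proof. intros [_ [_ H]]; exact H. Qed.

Lemma Ck_on_is_derive_rho (U : R -> R -> Prop) (k : nat) (f : Fun2) (r e : R) :
  Ck_on U (S k) f -> U r e -> is_derive (fun r' => f r' e) r (d_rho f r e).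
Proof. intros [H _] Hre; apply Derive_correct, (H r e Hre). Qed.

Lemma Ck_on_is_derive_eta (U : R -> R -> Prop) (k : nat) (f : Fun2) (r e : R) :
  Ck_on U (S k) f -> U r e -> is_derive (fun e' => f r e') e (d_eta f r e).
Proof. intros [H _] Hre; apply Derive_correct, (H r e Hre). Qed.

Lemma d_rho_d_eta_comm (U : R -> R -> Prop) (f : Fun2) (r e : R) :
  open2 U -> Ck_on U 2 f -> U r e -> d_rho (d_eta f) r e = d_eta (d_rho f) r e.
Proof.
  intros HU Hf Hre.
  destruct (HU r e Hre) as [eps [Heps Hball]].
  apply Schwarz.
  - exists (mkposreal eps Heps); intros u v Hu Hv.
    pose proof (Hball u v Hu Hv) as Huv.
    destruct Hf as [Hf [[Hr _] [He _]]].
    destruct (Hf u v Huv) as [_ [Hfr Hfe]].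
    destruct (He u v Huv) as [_ [Her _]].
    destruct (Hr u v Huv) as [_ [_ Hre']].
    repeat split; assumption.
  - apply continuity_2d_pt_filterlim, (Ck_on_d_rho _ _ _ (Ck_on_d_eta _ _ _ Hf)), Hre.
  - apply continuity_2d_pt_filterlim, (Ck_on_d_eta _ _ _ (Ck_on_d_rho _ _ _ Hf)), Hre.
Qed.

Lemma joyce_at_of_is_derive (Phi : Sec) (r e v0r v0e v1r v1e : R) :
  is_derive (fun r' => fst (Phi r' e)) r v0r ->
  is_derive (fun e' => fst (Phi r e')) e v0e ->
  is_derive (fun r' => snd (Phi r' e)) r v1r ->
  is_derive (fun e' => snd (Phi r e')) e v1e ->
  v0r + v1e = fst (Phi r e) / r -> v0e - v1r = 0 -> joyce_at Phi r e.
Proof.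
  intros H0r H0e H1r H1e Hdiv Hcurl.
  unfold joyce_at, d_rho, d_eta; cbv beta zeta.
  rewrite (is_derive_unique (fun r' : R => fst (Phi r' e)) r v0r H0r),
    (is_derive_unique (fun e' : R => fst (Phi r e')) e v0e H0e),
    (is_derive_unique (fun r' : R => snd (Phi r' e)) r v1r H1r),
    (is_derive_unique (fun e' : R => snd (Phi r e')) e v1e H1e).
  repeat split; auto; eexists; eassumption.
Qed.

(* Coquelicot states its differentiation rules for the generic [plus], [mult],
   [zero], [one] of an [AbsRing]; [apply] does not unify these with [Rplus],
   [Rmult], [0], [1], hence the specialisations. *)
Lemma is_derive_Rconst (c x : R) : is_derive (fun _ => c) x 0.
Proof. exact (is_derive_const c x). Qed.

Lemma is_derive_Rid (x : R) : is_derive (fun t => t) x 1.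
Proof. exact (is_derive_id x). Qed.

Section RealProductRule.

Variables (f g : R -> R) (x df dg : R).
Hypotheses (Hf : is_derive f x df) (Hg : is_derive g x dg).

Lemma is_derive_Rplus : is_derive (fun t => f t + g t) x (df + dg).
Proof. exact (is_derive_plus f g x df dg Hf Hg). Qed.

Lemma is_derive_Rmult : is_derive (fun t => f t * g t) x (df * g x + f x * dg).
Proof. exact (is_derive_mult f g x df dg Hf Hg Rmult_comm). Qed.

Lemma is_derive_Ropp : is_derive (fun t => - f t) x (- df).
Proof. exact (is_derive_opp f x df Hf). Qed.

End RealProductRule.

(* The rule is chosen by syntactic matching: letting [apply] try the rules in
   turn makes unification unfold [Rplus]/[Rmult] against atoms such as
   [fst (phi t e)], which is prohibitively slow. *)
Ltac product_rule :=
  repeat match goal with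
  | |- is_derive (fun _ => ?c) _ _ => apply is_derive_Rconst
  | |- is_derive (fun t => t) _ _ => apply is_derive_Rid
  | |- is_derive (fun _ => _ + _) _ _ => apply is_derive_Rplus
  | |- is_derive (fun _ => _ * _) _ _ => apply is_derive_Rmult
  | |- is_derive (fun _ => - _) _ _ => apply is_derive_Ropp
  | |- _ => eassumption
  end.

Lemma joyce_at_PhiOf (U : R -> R -> Prop) (F : Fun2) (phi : Sec) (r e : R) :
  open2 U -> Ck_on U 2 F -> U r e -> 0 < r ->
  d_rho (d_rho F) r e + d_eta (d_eta F) r e = 3 * F r e / (4 * r ^ 2) ->
  twistor_eq_at phi r e ->
  joyce_at (PhiOf F phi) r e.
Proof.
  intros HU HF Hre Hr Heigen [H0r [H1r [H0e H1e]]].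
  pose proof (d_rho_d_eta_comm U F r e HU HF Hre) as Hmixed.
  pose proof (Ck_on_is_derive_rho U 1 F r e HF Hre) as HFr.
  pose proof (Ck_on_is_derive_eta U 1 F r e HF Hre) as HFe.
  pose proof (Ck_on_is_derive_rho U 0 _ r e (Ck_on_d_rho _ _ _ HF) Hre) as HFrr.
  pose proof (Ck_on_is_derive_eta U 0 _ r e (Ck_on_d_rho _ _ _ HF) Hre) as HFre.
  pose proof (Ck_on_is_derive_rho U 0 _ r e (Ck_on_d_eta _ _ _ HF) Hre) as HFer.
  pose proof (Ck_on_is_derive_eta U 0 _ r e (Ck_on_d_eta _ _ _ HF) Hre) as HFee.
  eapply joyce_at_of_is_derive; unfold PhiOf, dF_dot, flat; cbn [fst snd].
  1-4: product_rule.
  all: cbv beta; rewrite Hmixed.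
  all: replace (d_eta (d_eta F) r e)
         with (3 * F r e / (4 * r ^ 2) - d_rho (d_rho F) r e) by lra.
  all: field; lra.
Qed.

Theorem proposition7p1 (U : R -> R -> Prop) (F : R -> R -> R) (a b : R) :
  open2 U ->
  (forall r e, U r e -> 0 < r) ->
  smooth_on U F ->
  (forall r e, U r e ->
     d_rho (d_rho F) r e + d_eta (d_eta F) r e = 3 * F r e / (4 * r ^ 2)) ->
  forall r e, U r e -> joyce_at (PhiOf F (twistor a b)) r e.
Proof.
  intros HU Hpos HF Heigen r e Hre.
  pose proof (Hpos r e Hre) as Hr.
  exact (joyce_at_PhiOf U F (twistor a b) r e HU (HF 2%nat) Hre Hr (Heigen r e Hre)
           (twistor_eq_at_twistor a b r e Hr)).
Qed.
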